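(* Every SB-generated group has uncountable cofinality, i.e., it cannot be expressed as the union of a strictly increasing sequence $H_1\subsetneq H_2\subsetneq\cdots$ of subgroups.
   Context: A subset of a group $G$ is strongly bounded if it has finite diameter in every left-invariant metric on $G$; a group is SB-generated if it is generated by a strongly bounded subset. *)

From Stdlib Require Import Reals.
Open Scope R_scope.

Section Groups.
Variables (G : Type) (mul : G -> G -> G) (inv : G -> G) (e : G).

Definition is_group : Prop :=
  (forall x y z, mul x (mul y z) = mul (mul x y) z) /\
  (forall x, mul e x = x) /\ (forall x, mul x e = x) /\
  (forall x, mul (inv x) x = e) /\ (forall x, mul x (inv x) = e).

Definition is_subgroup (H : G -> Prop) : Prop :=
  H e /\ (forall x y, H x -> H y -> H (mul x y)) /\ (forall x, H x -> H (inv x)).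

Definition generated (A : G -> Prop) : G -> Prop :=
  fun g => forall H, is_subgroup H -> (forall a, A a -> H a) -> H g.

Definition is_metric (d : G -> G -> R) : Prop :=
  (forall x y, 0 <= d x y) /\
  (forall x y, d x y = 0 <-> x = y) /\
  (forall x y, d x y = d y x) /\
  (forall x y z, d x z <= d x y + d y z).

Definition left_invariant (d : G -> G -> R) : Prop :=
  forall g x y, d (mul g x) (mul g y) = d x y.

Definition finite_diameter (d : G -> G -> R) (A : G -> Prop) : Prop :=
  exists M : R, forall x y, A x -> A y -> d x y <= M.

Definition strongly_bounded (A : G -> Prop) : Prop :=
  forall d, is_metric d -> left_invariant d -> finite_diameter d A.

Definition SB_generated : Prop :=
  exists A : G -> Prop, strongly_bounded A /\ forall g, generated A g.

Definition uncountable_cofinality : Prop :=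
  ~ exists H : nat -> (G -> Prop),
      (forall n, is_subgroup (H n)) /\
      (forall n g, H n g -> H (S n) g) /\
      (forall n, exists g, H (S n) g /\ ~ H n g) /\
      (forall g, exists n, H n g).

End Groups.

Arguments is_group {G} mul inv e.
Arguments is_subgroup {G} mul inv e H.
Arguments generated {G} mul inv e A g.
Arguments left_invariant {G} mul d.
Arguments strongly_bounded {G} mul A.
Arguments SB_generated {G} mul inv e.
Arguments uncountable_cofinality {G} mul inv e.

(* An exhausting chain H_0 ⊊ H_1 ⊊ ... of subgroups gives each element a
   level, the least n with g ∈ H_n; the level satisfies
   level (g h) <= max (level g) (level h) and level g⁻¹ = level g, so
   d x y := level (x⁻¹ y) + 1 for x <> y is a left-invariant metric.  A
   strongly bounded set has bounded d-diameter, hence lies in a single H_n,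
   and then so does the subgroup it generates, contradicting strictness. *)
From Stdlib Require Import Reals ClassicalEpsilon Classical Wf_nat Lra Lia.

Section GroupLaws.

Variables (G : Type) (mul : G -> G -> G) (inv : G -> G) (e : G).
Hypothesis HG : is_group mul inv e.

Let mulA : forall x y z, mul x (mul y z) = mul (mul x y) z.
Proof. apply HG. Qed.
Let mul1g : forall x, mul e x = x.
Proof. apply HG. Qed.
Let mulg1 : forall x, mul x e = x.
Proof. apply HG. Qed.
Let mulVg : forall x, mul (inv x) x = e.
Proof. apply HG. Qed.
Let mulgV : forall x, mul x (inv x) = e.
Proof. apply HG. Qed.

Lemma inv_unique (u v : G) : mul u v = e -> v = inv u.
Proof.
  intros Huv.
  rewrite <- (mul1g v), <- (mulVg u), <- mulA, Huv, mulg1. reflexivity.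
Qed.

Lemma invgK (g : G) : inv (inv g) = g.
Proof. symmetry. apply inv_unique, mulVg. Qed.

Lemma invMg (a b : G) : inv (mul a b) = mul (inv b) (inv a).
Proof.
  symmetry. apply inv_unique.
  rewrite <- mulA, (mulA b), mulgV, mul1g, mulgV. reflexivity.
Qed.

Lemma mulKg (a b : G) : mul a (mul (inv a) b) = b.
Proof. rewrite mulA, mulgV, mul1g. reflexivity. Qed.

Lemma mulg_left_inj (g x y : G) : mul g x = mul g y -> x = y.
Proof.
  intros E.
  rewrite <- (mulKg (inv g) x), <- (mulKg (inv g) y), invgK, E. reflexivity.
Qed.

Lemma invM_left_translate (g x y : G) :
  mul (inv (mul g x)) (mul g y) = mul (inv x) y.
Proof. rewrite invMg, <- mulA, (mulA (inv g)), mulVg, mul1g. reflexivity. Qed.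

Lemma invM_chain (x y z : G) :
  mul (mul (inv x) y) (mul (inv y) z) = mul (inv x) z.
Proof. rewrite <- mulA, mulKg. reflexivity. Qed.

Section LengthMetric.

Variable N : G -> R.
Hypothesis N_ge0 : forall g, 0 <= N g.
Hypothesis N_subadd : forall g h, N (mul g h) <= N g + N h.
Hypothesis N_inv : forall g, N (inv g) = N g.

(* N need not vanish only at e; the added 1 makes the distance definite. *)
Definition length_metric (x y : G) : R :=
  if excluded_middle_informative (x = y) then 0 else N (mul (inv x) y) + 1.

Lemma length_metric_is_metric : is_metric G length_metric.
Proof.
  unfold length_metric; split; [|split; [|split]].
  - intros x y. destruct excluded_middle_informative; [lra|].
    pose proof (N_ge0 (mul (inv x) y)). lra.
  - intros x y. destruct excluded_middle_informative as [E|E]; [tauto|].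
    pose proof (N_ge0 (mul (inv x) y)). split; [lra|congruence].
  - intros x y.
    destruct (excluded_middle_informative (x = y)) as [E|E];
      destruct (excluded_middle_informative (y = x)) as [E'|E']; try congruence.
    rewrite <- (N_inv (mul (inv x) y)), invMg, invgK. reflexivity.
  - intros x y z.
    pose proof (N_ge0 (mul (inv x) y)). pose proof (N_ge0 (mul (inv y) z)).
    destruct (excluded_middle_informative (x = z)) as [Exz|Exz].
    { repeat destruct excluded_middle_informative; lra. }
    destruct (excluded_middle_informative (x = y)) as [Exy|Exy].
    { subst. destruct excluded_middle_informative; [congruence|lra]. }
    destruct (excluded_middle_informative (y = z)) as [Eyz|Eyz].
    { subst. lra. }
    rewrite <- invM_chain with (y := y).
    pose proof (N_subadd (mul (inv x) y) (mul (inv y) z)). lra.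
Qed.

Lemma length_metric_left_invariant : left_invariant mul length_metric.
Proof.
  intros g x y. unfold length_metric. rewrite invM_left_translate.
  destruct (excluded_middle_informative (mul g x = mul g y)) as [E|E];
    destruct (excluded_middle_informative (x = y)) as [E'|E']; auto.
  - exfalso. exact (E' (mulg_left_inj g x y E)).
  - exfalso. apply E. rewrite E'. reflexivity.
Qed.

Lemma strongly_bounded_length_bounded (A : G -> Prop) :
  strongly_bounded mul A ->
  exists M, forall a b, A a -> A b -> N (mul (inv a) b) <= M.
Proof.
  intros HA.
  destruct (HA length_metric length_metric_is_metric length_metric_left_invariant)
    as [M HM].
  exists (Rmax M (N e)). intros a b Ha Hb.
  specialize (HM a b Ha Hb). unfold length_metric in HM.
  destruct excluded_middle_informative as [E|E].
  - subst. rewrite mulVg. apply Rmax_r.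
  - eapply Rle_trans; [|apply Rmax_l]. lra.
Qed.

End LengthMetric.

Section SubgroupChain.

Variable H : nat -> G -> Prop.
Hypothesis H_subgroup : forall n, is_subgroup mul inv e (H n).
Hypothesis H_increasing : forall n g, H n g -> H (S n) g.
Hypothesis H_exhaustive : forall g, exists n, H n g.

Lemma chain_monotone (n m : nat) (g : G) : (n <= m)%nat -> H n g -> H m g.
Proof. intros Hnm. induction Hnm; auto. Qed.

Definition level (g : G) : nat :=
  epsilon (inhabits 0%nat) (fun n => H n g /\ forall m, H m g -> (n <= m)%nat).

Lemma level_spec (g : G) :
  H (level g) g /\ forall m, H m g -> (level g <= m)%nat.
Proof.
  unfold level. apply epsilon_spec.
  destruct (dec_inh_nat_subset_has_unique_least_element (fun n => H n g)
              (fun n => classic (H n g)) (H_exhaustive g)) as [n [Hn _]].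
  exists n. exact Hn.
Qed.

Lemma in_chain_above_level (g : G) (n : nat) : (level g <= n)%nat -> H n g.
Proof. intros Hn. apply (chain_monotone (level g)); [exact Hn | apply level_spec]. Qed.

Lemma level_mul (g h : G) : (level (mul g h) <= Nat.max (level g) (level h))%nat.
Proof. apply level_spec, H_subgroup; apply in_chain_above_level; lia. Qed.

Lemma level_inv (g : G) : level (inv g) = level g.
Proof.
  assert (Hle : forall x, (level (inv x) <= level x)%nat).
  { intros x. apply level_spec, H_subgroup, level_spec. }
  apply Nat.le_antisymm; [apply Hle|].
  rewrite <- (invgK g) at 1. apply Hle.
Qed.

Lemma chain_absorbs_strongly_bounded (A : G -> Prop) :
  strongly_bounded mul A -> exists n, forall a, A a -> H n a.
Proof.
  intros HA.
  destruct (classic (exists a0, A a0)) as [[a0 Ha0]|Hempty].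
  2:{ exists 0%nat. intros a Ha. exfalso. eauto. }
  destruct (strongly_bounded_length_bounded (fun g => INR (level g))) with (A := A)
    as [M HM]; auto.
  - intros g. apply pos_INR.
  - intros g h. rewrite <- plus_INR. apply le_INR.
    pose proof (level_mul g h). lia.
  - intros g. rewrite level_inv. reflexivity.
  - destruct (INR_unbounded M) as [k Hk].
    exists (Nat.max k (level a0)). intros a Ha.
    rewrite <- (mulKg a0 a). apply H_subgroup; apply in_chain_above_level; [lia|].
    assert (Hlt : INR (level (mul (inv a0) a)) < INR k)
      by (specialize (HM a0 a Ha0 Ha); lra).
    apply INR_lt in Hlt. lia.
Qed.

End SubgroupChain.

End GroupLaws.

Theorem proposition2p6 (G : Type) (mul : G -> G -> G) (inv : G -> G) (e : G)
  (HG : is_group mul inv e) :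
  SB_generated mul inv e -> uncountable_cofinality mul inv e.
Proof.
  intros [A [HA Hgen]] [H [Hsub [Hinc [Hstrict Hcov]]]].
  destruct (chain_absorbs_strongly_bounded G mul inv e HG H Hsub Hinc Hcov A HA)
    as [n Hn].
  destruct (Hstrict n) as [g [_ Hg]].
  exact (Hg (Hgen g (H n) (Hsub n) Hn)).
Qed.
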